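(* Let $\mathcal{X}$ be Polish with a lower semicontinuous metric $d$, let $\alpha,\theta:[0,\infty)\to[0,\infty)$ be convex increasing bijections (so $\alpha(0)=\theta(0)=0$), and let $\mu$ be a Borel probability measure on $\mathcal{X}$ such that $\alpha(\mathcal{T}_{\theta(d)}(\nu,\mu))\le H(\nu|\mu)$ for all Borel probability measures $\nu$. Then for every $x_o\in\mathcal{X}$ there exists $\varepsilon>0$ such that $$\int_{\mathcal{X}}\exp\big(\alpha\circ\theta(\varepsilon\, d(x,x_o))\big)\,d\mu(x)<+\infty.$$
   Context: $\mathcal{T}_{\theta(d)}(\nu,\mu)=\inf_\pi\int\theta(d(x,y))\,d\pi(x,y)$ over couplings $\pi$ of $\nu$ and $\mu$. $H(\nu|\mu)=\int\log\frac{d\nu}{d\mu}d\nu$ if $\nu\ll\mu$, $+\infty$ otherwise. *)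

From HB Require Import structures.
From mathcomp Require Import all_boot all_order all_algebra.
From mathcomp Require Import all_classical all_reals all_analysis.
Set Implicit Arguments. Unset Strict Implicit. Unset Printing Implicit Defensive.
Import Order.TTheory GRing.Theory Num.Theory.
Import numFieldNormedType.Exports.
Local Open Scope classical_set_scope.
Local Open Scope ring_scope.
Local Open Scope charge_scope.

(* Polish space: the topology of X is induced by a complete metric (X is a
   complete (pseudo)metric space which is Hausdorff, hence metric) and X is
   separable. *)
Definition polish_space (R : realType) (X : completePseudoMetricType R) :=
  hausdorff_space X /\ exists D : set X, countable D /\ dense D.

Definition borel (X : ptopologicalType) := g_sigma_algebraType (@open X).

Definition lsc_metric (X : topologicalType) (R : realType) (d : X -> X -> R) :=
  [/\ forall x y, d x y = 0 <-> x = y,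
      forall x y, d x y = d y x,
      forall x y z, d x z <= d x y + d y z &
      lower_semicontinuous (fun p : X * X => (d p.1 p.2)%:E)].

Definition cvx_incr_bij (R : realType) (f : R -> R) :=
  [/\ forall x, 0 <= x -> 0 <= f x,
      forall x y, 0 <= x -> x < y -> f x < f y,
      forall y, 0 <= y -> exists2 x, 0 <= x & f x = y &
      forall x y t, 0 <= x -> 0 <= y -> 0 <= t <= 1 ->
        f (t * x + (1 - t) * y) <= t * f x + (1 - t) * f y].

Definition ext_fun (R : realType) (f : R -> R) (t : \bar R) : \bar R :=
  match t with
  | r%:E => (f r)%:E
  | +oo%E => +oo%E
  | -oo%E => -oo%E
  end.

Section transport.
Context (R : realType) (X : completePseudoMetricType R).
Local Notation B := (borel X).

Definition coupling (nu mu : probability B R) (pi : probability (B * B)%type R) :=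
  (forall A : set B, measurable A -> pi (A `*` setT) = nu A) /\
  (forall A : set B, measurable A -> pi (setT `*` A) = mu A).

Definition transport_cost (c : X -> X -> R) (nu mu : probability B R) : \bar R :=
  ereal_inf [set v | exists pi : probability (B * B)%type R,
                       coupling nu mu pi /\ v = (\int[pi]_z (c z.1 z.2)%:E)%E].

Definition rel_entropy (nu mu : probability B R) : \bar R :=
  if pselect (nu `<< mu) then
    (\int[nu]_x (ln (fine ('d (charge_of_finite_measure nu) '/d mu x)))%:E)%E
  else +oo%E.
End transport.

From mathcomp Require Import all_boot all_order all_algebra.
From mathcomp Require Import all_classical all_reals all_analysis.
From mathcomp Require Import measurable_realfun lra.
Import Order.TTheory GRing.Theory Num.Theory.
Import HBNNSimple.
Set Implicit Arguments.
Unset Strict Implicit.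
Unset Printing Implicit Defensive.
Local Open Scope classical_set_scope.
Local Open Scope ring_scope.

(* Conditioning mu on B = {d(., xo) > r} gives a probability nu with
   H(nu | mu) = - ln mu(B), and every coupling of nu and mu has to carry the
   mass m = mu(d(., xo) <= s) over a distance at least r - s, so that
   T(nu, mu) >= theta(r - s) m.  The transport-entropy inequality hence gives
   the tail bound mu(d(., xo) > r) <= exp(- alpha(theta(r - s) m)), and m > 0
   for s large.  Since phi = alpha o theta is convex with phi(0) = 0, it is
   superadditive and grows at least linearly; summing over the superlevel
   sets {d(., xo) > k - 1}, the integral of exp(phi(m d(., xo) / 8)) is then
   dominated by a geometric series. *)

Section cvx_incr_bij.
Variables (R : realType) (f : R -> R).
Hypothesis hf : cvx_incr_bij f.

Lemma cvx_incr_bij_ge0 x : 0 <= x -> 0 <= f x.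
Proof. by case: hf => + _ _ _; apply. Qed.

Lemma cvx_incr_bij_lt x y : 0 <= x -> x < y -> f x < f y.
Proof. by case: hf => _ + _ _; apply. Qed.

Lemma cvx_incr_bij_le x y : 0 <= x -> x <= y -> f x <= f y.
Proof.
move=> x0; rewrite le_eqVlt => /predU1P[->//|xy].
exact/ltW/cvx_incr_bij_lt.
Qed.

Lemma cvx_incr_bij0 : f 0 = 0.
Proof.
case: hf => _ _ fsurj _; have [x x0 fx0] := fsurj 0 (lexx 0).
apply/eqP; rewrite eq_le cvx_incr_bij_ge0// andbT -[leRHS]fx0.
exact: cvx_incr_bij_le.
Qed.

Lemma cvx_incr_bij_scale t x : 0 <= x -> 0 <= t <= 1 -> f (t * x) <= t * f x.
Proof.
case: hf => _ _ _ fcvx x0 t01.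
by have := fcvx x 0 t x0 (lexx 0) t01; rewrite cvx_incr_bij0 !mulr0 !addr0.
Qed.

Lemma cvx_incr_bij1_gt0 : 0 < f 1.
Proof. by rewrite -cvx_incr_bij0; exact: cvx_incr_bij_lt. Qed.

Lemma cvx_incr_bij_linear_lb y : 0 <= y -> f 1 * (y - 1) <= f y.
Proof.
move=> y0; have f1 := cvx_incr_bij1_gt0.
have [y1|y1] := leP y 1.
  apply: le_trans _ (cvx_incr_bij_ge0 y0).
  by rewrite pmulr_rle0// subr_le0.
have yp : 0 < y by apply: lt_trans y1.
have := @cvx_incr_bij_scale y^-1 y y0.
rewrite mulVf ?gt_eqF// invr_ge0 (ltW yp) invf_le1// (ltW y1) => /(_ isT).
rewrite ler_pdivlMl// => fy; apply: le_trans fy.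
by rewrite mulrC ler_pM2r//; lra.
Qed.

Lemma cvx_incr_bij_double x : 0 <= x -> 2 * f x <= f (2 * x).
Proof.
move=> x0; have := @cvx_incr_bij_scale 2^-1 (2 * x).
rewrite mulrA mulVf ?pnatr_eq0// mul1r mulr_ge0//.
rewrite invr_ge0 invf_le1 ?ler1n// ler0n => /(_ isT isT).
by rewrite ler_pdivlMl.
Qed.

End cvx_incr_bij.

Lemma cvx_incr_bij_comp (R : realType) (f g : R -> R) :
  cvx_incr_bij f -> cvx_incr_bij g -> cvx_incr_bij (f \o g).
Proof.
move=> hf hg; have g0 x : 0 <= x -> 0 <= g x := @cvx_incr_bij_ge0 _ _ hg x.
split.
- by move=> x x0 /=; exact: (cvx_incr_bij_ge0 hf (g0 x x0)).
- by move=> x y x0 xy /=; exact: (cvx_incr_bij_lt hf (g0 x x0) (cvx_incr_bij_lt hg x0 xy)).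
- move=> z z0; case: hf => _ _ fsurj _; have [y y0 <-] := fsurj z z0.
  by case: hg => _ _ gsurj _; have [x x0 <-] := gsurj y y0; exists x.
- move=> x y t x0 y0 /[dup] t01 /andP[t0 t1] /=.
  case: (hf) => _ _ _ fcvx; case: (hg) => _ _ _ gcvx.
  apply: le_trans (fcvx _ _ t (g0 x x0) (g0 y y0) t01).
  apply: (cvx_incr_bij_le hf _ (gcvx x y t x0 y0 t01)).
  by apply: g0; rewrite addr_ge0 ?mulr_ge0// subr_ge0.
Qed.

Lemma cvx_incr_bij_tail_decay (R : realType) (phi : R -> R) (s m k : R) :
  cvx_incr_bij phi -> 0 <= s -> 0 < m -> 2 * (1 + s) <= k ->
  phi (m / 8 * (k + 1)) - phi (m * (k - 1 - s)) <= phi 1 - phi 1 * (m / 4 * k).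
Proof.
move=> hphi s0 m0 ks; set y := m / 4 * k.
have y0 : 0 <= y by rewrite mulr_ge0 ?divr_ge0 ?ltW//; lra.
have small : phi (m / 8 * (k + 1)) <= phi y.
  apply: (cvx_incr_bij_le hphi); first by rewrite mulr_ge0 ?divr_ge0 ?ltW//; lra.
  by rewrite /y; nra.
have large : 2 * phi y <= phi (m * (k - 1 - s)).
  apply: le_trans (cvx_incr_bij_double hphi y0) _.
  by apply: (cvx_incr_bij_le hphi); rewrite /y; nra.
have := cvx_incr_bij_linear_lb hphi y0; lra.
Qed.

Lemma exp_cvx_incr_bij_geometric_bound (R : realType) (phi : R -> R) (s m : R) :
  cvx_incr_bij phi -> 0 <= s -> 0 < m ->
  exists M q, `|q| < 1 /\
   forall (k : nat) (p : R), p <= 1 ->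
     (s <= k%:R - 1 -> p <= expR (- phi (m * (k%:R - 1 - s)))) ->
     expR (phi (m / 8 * k.+1%:R)) * p <= M * q ^+ k.
Proof.
move=> hphi s0 m0; set g := phi 1 * (m / 4).
have g0 : 0 < g by rewrite mulr_gt0 ?divr_gt0 ?(cvx_incr_bij1_gt0 hphi).
set K := Num.bound (2 * (1 + s)).
have hK : 2 * (1 + s) < K%:R by apply: archi_boundP; lra.
set A := expR (phi (m / 8 * K.+1%:R)).
exists (expR (phi 1) + A * expR (g * K%:R)), (expR (- g)); split.
  by rewrite ger0_norm ?expR_ge0// expR_lt1 oppr_lt0.
move=> k p p1 tail; rewrite -expRM_natr.
(* For k >= K the tail decay lemma applies; the first K terms are absorbed in M. *)
have [Kk|kK] := leqP K k.
- have Kk' : (K%:R : R) <= k%:R by rewrite ler_nat.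
  have decay := cvx_incr_bij_tail_decay hphi s0 m0 (ltW (lt_le_trans hK Kk')).
  have sk : s <= k%:R - 1 by lra.
  apply: (le_trans (ler_wpM2l (expR_ge0 _) (tail sk))).
  apply: (@le_trans _ _ (expR (phi 1) * expR (- g * k%:R))).
    by rewrite natr1 in decay; rewrite -!expRD ler_expR /g; lra.
  by rewrite ler_wpM2r ?expR_ge0// lerDl mulr_ge0 ?expR_ge0.
- have AK : expR (phi (m / 8 * k.+1%:R)) <= A.
    rewrite ler_expR; apply: (cvx_incr_bij_le hphi).
      by rewrite mulr_ge0 ?divr_ge0 ?ltW.
    by rewrite ler_pM2l ?divr_gt0// ler_nat ltnW.
  have E1 : 1 <= expR (g * K%:R) * expR (- g * k%:R).
    rewrite -expRD; apply: le_trans (expR_ge1Dx _).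
    have : (k%:R : R) <= K%:R by rewrite ler_nat ltnW.
    nra.
  apply: (le_trans (ler_wpM2l (expR_ge0 _) p1)); rewrite mulr1.
  apply: (le_trans AK).
  apply: (@le_trans _ _ (A * expR (g * K%:R) * expR (- g * k%:R))).
    by rewrite -mulrA -[leLHS]mulr1 ler_wpM2l ?expR_ge0.
  by rewrite ler_wpM2r ?expR_ge0// lerDr expR_ge0.
Qed.

Lemma eseries_geometric (R : realType) (M q : R) : `|q| < 1 ->
  (\sum_(k <oo) (M * q ^+ k)%:E = (M / (1 - q))%:E)%E.
Proof.
move=> q1; apply: cvg_lim => //; apply: cvg_EFin.
  by apply: nearW => n; rewrite sumEFin.
rewrite (_ : (fine \o _) = series (geometric M q)); last first.
  by apply/funext => n; rewrite /= sumEFin /= /series /=.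
exact: cvg_geometric_series.
Qed.

Section integral_bounds.
Context d (T : measurableType d) (R : realType) (mu : {measure set T -> \bar R}).
Local Open Scope ereal_scope.

(* No measurability of [f] is needed: a nonnegative integral is the supremum
   of the integrals of the simple functions below the integrand. *)
Lemma le_integral_nnsfun (h : {nnsfun T >-> R}) (f : T -> \bar R) :
  (forall x, 0 <= f x) -> (forall x, (h x)%:E <= f x) ->
  \int[mu]_x (h x)%:E <= \int[mu]_x f x.
Proof.
move=> f0 hf; rewrite integral_nnsfun// patch_setT ge0_integralTE//.
by apply: ereal_sup_ubound; exists h.
Qed.

Lemma ge0_le_integral_measurable_r (f g : T -> \bar R) :
  (forall x, 0 <= f x) -> measurable_fun [set: T] g -> (forall x, f x <= g x) ->
  \int[mu]_x f x <= \int[mu]_x g x.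
Proof.
move=> f0 mg fg; rewrite [leLHS]ge0_integralTE//.
apply/ge_ereal_sup => _ [h /= hf <-].
rewrite (_ : sintegral mu h = \int[mu]_x (h x)%:E); last first.
  by rewrite integral_nnsfun// patch_setT.
apply: ge0_le_integral => //.
- by move=> x _; rewrite lee_fin.
- by apply/measurable_EFinP; exact: measurable_funTS.
- by move=> x _; exact: le_trans (hf x) (fg x).
Qed.

End integral_bounds.

Section geometric_layers.
Context d (T : measurableType d) (R : realType) (mu : {finite_measure set T -> \bar R}).
Local Open Scope ereal_scope.

Lemma integral_lty_geometric_layers (g : T -> R) (F : R -> R) (M q : R) :
  (forall r, measurable [set x | (r < g x)%R]) -> (forall x, (0 <= g x)%R) ->
  (forall u, (0 <= F u)%R) -> (forall u v, (0 <= u)%R -> (u <= v)%R -> (F u <= F v)%R) ->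
  (`|q| < 1)%R ->
  (forall k : nat, F k.+1%:R * fine (mu [set x | k%:R - 1 < g x]) <= M * q ^+ k)%R ->
  (\int[mu]_x (F (g x))%:E < +oo)%E.
Proof.
move=> mg g0 F0 Fle q1 layer.
pose u (k : nat) x := (F k.+1%:R * \1_[set x | (k%:R - 1 < g x)%R] x)%:E.
have u0 k x : 0 <= u k x by rewrite lee_fin mulr_ge0.
have mu_ k : measurable_fun setT (u k).
  by apply/measurable_EFinP; apply: measurable_funM => //; exact: measurable_indic.
apply: (@le_lt_trans _ _ (\int[mu]_x \sum_(k <oo) u k x)).
  apply: ge0_le_integral_measurable_r => [x||x]; first by rewrite lee_fin.
    exact: ge0_emeasurable_sum.
  have /andP[jg gj] := truncn_itv (g0 x); set j := Num.truncn (g x) in jg gj.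
  apply: le_trans (nneseries_lim_ge j.+1 (fun k _ _ => u0 k x)).
  rewrite big_nat_recr//= addeC -[leLHS]adde0 leeD//; last exact: sume_ge0.
  rewrite /u indicE mem_set/= ?mulr1; last lra.
  by rewrite lee_fin Fle// ltW.
rewrite integral_nneseries//.
apply: (@le_lt_trans _ _ (\sum_(k <oo) (M * q ^+ k)%:E)); last first.
  by rewrite eseries_geometric// ltey.
apply: lee_nneseries => [k _ _|k _]; first by apply: integral_ge0 => x _.
under eq_integral do rewrite /u EFinM.
rewrite ge0_integralZl_EFin//; last exact/measurable_EFinP/measurable_indic.
rewrite integral_indic// setIT.
by have := layer k; rewrite -lee_fin EFinM fineK// fin_num_measure.
Qed.

End geometric_layers.

Lemma exists_sublevel_gt0 d (T : measurableType d) (R : realType)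
    (P : probability T R) (g : T -> R) :
  (forall r, measurable [set x | g x <= r]) ->
  exists n : nat, (0 < P [set x | (g x <= n%:R)%R])%E.
Proof.
move=> mg; apply/not_existsP => P0.
have {}P0 n : P [set x | g x <= n%:R] = 0%E.
  by apply/eqP; rewrite eq_le measure_ge0 andbT leNgt; apply/negP.
have : (P setT <= \sum_(n <oo) P [set x | (g x <= n%:R)%R])%E.
  apply: measure_sigma_subadditive => // x _; exists (Num.bound `|g x|) => //=.
  exact/ltW/(le_lt_trans (ler_norm _))/archi_boundP.
by rewrite eseries0// probability_setT lee_fin ler10.
Qed.

Section probability_fine.
Context d (T : measurableType d) (R : realType) (P : probability T R).

Lemma fine_probability_gt0 A : measurable A -> (0 < P A)%E -> 0 < fine (P A).
Proof.
by move=> mA PA0; rewrite fine_gt0// PA0 (le_lt_trans (probability_le1 P mA)) ?ltey.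
Qed.

Lemma fine_probability_le1 A : measurable A -> fine (P A) <= 1.
Proof. by move=> mA; rewrite -lee_fin fineK ?fin_num_measure// probability_le1. Qed.

End probability_fine.

Lemma mnormalizeE d (T : measurableType d) (R : realType)
    (m : {measure set T -> \bar R}) (P : probability T R) A :
  (0 < m setT < +oo)%E -> mnormalize m P A = (m A * (fine (m setT))^-1%:E)%E.
Proof. by move=> /andP[m0 moo]; rewrite /mnormalize gt_eqF// lt_eqF. Qed.

Section lsc_metric.
Variables (R : realType) (X : completePseudoMetricType R) (d : X -> X -> R).
Hypothesis hd : lsc_metric d.

Lemma lsc_metric_ge0 x y : 0 <= d x y.
Proof.
case: hd => d0 dC dtri _; have := dtri x y x.
by rewrite (proj2 (d0 x x) erefl) (dC y x); lra.
Qed.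

Lemma open_dist_gt xo r : open [set x : X | r < d x xo].
Proof.
case: hd => _ _ _ /lower_semicontinuousP/(_ r) op.
rewrite (_ : [set x | _] =
    (fun x => (x, xo)) @^-1` [set p : X * X | (r%:E < (d p.1 p.2)%:E)%E]).
  by apply: open_comp => // x _; apply: cvg_pair => //; exact: cvg_cst.
by apply/seteqP; split => x /=; rewrite lte_fin.
Qed.

Lemma measurable_dist_gt xo r : measurable ([set x | r < d x xo] : set (borel X)).
Proof. by apply: sub_sigma_algebra; exact: open_dist_gt. Qed.

Lemma measurable_dist_le xo r : measurable ([set x | d x xo <= r] : set (borel X)).
Proof.
rewrite (_ : [set x | _] = ~` [set x | r < d x xo]).
  by apply: measurableC; exact: measurable_dist_gt.
by apply/seteqP; split => x /=; rewrite real_leNgt ?num_real// => /negP.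
Qed.

End lsc_metric.

Section cond_prob.
Variables (R : realType) (X : completePseudoMetricType R).
Variables (mu : probability (borel X) R) (B : set (borel X)).
Hypothesis mB : measurable B.
Local Open Scope ereal_scope.

(* When mu B = 0, mnormalize falls back to mu itself. *)
Definition cond_prob : probability (borel X) R := mnormalize (mrestr mu mB) mu.

Hypothesis muB : 0 < mu B.

Let muB_gt0 : (0 < fine (mu B))%R := fine_probability_gt0 mB muB.

Lemma cond_probE A : cond_prob A = mu (A `&` B) * (fine (mu B))^-1%:E.
Proof.
rewrite /cond_prob /= mnormalizeE /= /mrestr setTI//.
by rewrite muB (le_lt_trans (probability_le1 mu mB)) ?ltey.
Qed.

Lemma cond_prob_setC : cond_prob (~` B) = 0.
Proof. by rewrite cond_probE setICl measure0 mul0e. Qed.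

Lemma cond_prob_dominates : cond_prob `<< mu.
Proof.
move=> N muN A mA AN; rewrite cond_probE.
suff -> : mu (A `&` B) = 0 by rewrite mul0e.
apply/eqP; rewrite eq_le measure_ge0 andbT -(muN A mA AN).
by apply: le_measure; rewrite ?inE//; exact: measurableI.
Qed.

Local Open Scope charge_scope.

Lemma cond_prob_density_ae :
  ae_eq cond_prob setT ('d (charge_of_finite_measure cond_prob) '/d mu)
    (cst (fine (mu B))^-1%:E).
Proof.
have dom := cond_prob_dominates.
pose g x := (fine (mu B))^-1%:E * (\1_B x)%:E.
have mg : measurable_fun setT g.
  by apply: measurable_funeM; exact/measurable_EFinP/measurable_indic.
have density_g : ae_eq mu setT ('d (charge_of_finite_measure cond_prob) '/d mu) g.
  apply: integral_ae_eq => //; first exact: Radon_Nikodym_integrable.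
  move=> E _ mE; rewrite -Radon_Nikodym_integral//.
  rewrite ge0_integralZl_EFin//; last 2 first.
  - exact/measurable_EFinP/measurable_funTS/measurable_indic.
  - by rewrite invr_ge0 ltW.
  by rewrite integral_indic//= cond_probE setIC muleC.
apply: ae_eq_trans (null_dominates_ae_eq measurableT dom density_g) _.
exists (~` B); split; [exact: measurableC|exact: cond_prob_setC|].
by move=> x /= gx; apply: contra_not gx => Bx _; rewrite /g indicE mem_set// mule1.
Qed.

Lemma rel_entropy_cond_prob : rel_entropy cond_prob mu = (- ln (fine (mu B)))%:E.
Proof.
rewrite /rel_entropy; case: pselect => [dom|/(_ cond_prob_dominates)//].
set f := 'd _ '/d mu.
have lnf := ae_eq_comp (fun v => (ln (fine v))%:E) cond_prob_density_ae.
rewrite (ae_eq_integral (cst (ln (fine (mu B))^-1)%:E) (fun x => (ln (fine (f x)))%:E)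
  measurableT _ _ lnf)//.
- by rewrite integral_cst//= probability_setT mule1 lnV ?posrE.
- apply/measurable_EFinP; apply: measurableT_comp; first exact: measurable_ln.
  apply: measurableT_comp; first exact: fine_measurable.
  exact/measurable_int/Radon_Nikodym_integrable.
Qed.

End cond_prob.

Section transport_lower_bound.
Variables (R : realType) (X : completePseudoMetricType R).
Local Open Scope ereal_scope.

Lemma coupling_measureX_ge (nu mu : probability (borel X) R) pi (B S : set (borel X)) :
  coupling nu mu pi -> measurable B -> measurable S -> nu (~` B) = 0 ->
  mu S <= pi (B `*` S).
Proof.
move=> [piB piS] mB mS nuCB; have mCB : measurable (~` B) by exact: measurableC.
rewrite -piS// (_ : setT `*` S = (B `*` S) `|` (~` B `*` S)); last first.
  apply/seteqP; split=> [[x y] [_ /= Sy]|[x y] [[Bx Sy]|[Bx Sy]]//].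
  by have [Bx|Bx] := pselect (B x); [left|right].
rewrite (le_trans (measureU2 _ _ _))//; try exact: measurableX.
rewrite -[leRHS]adde0 leeD2l// -nuCB -piB//.
by apply: le_measure; rewrite ?inE//; try exact: measurableX; move=> [x y] [].
Qed.

Lemma transport_cost_ge (c : X -> X -> R) (nu mu : probability (borel X) R)
    (B S : set (borel X)) (k : R) :
  measurable B -> measurable S -> nu (~` B) = 0 -> (0 <= k)%R ->
  (forall x y, 0 <= c x y)%R -> (forall x y, B x -> S y -> k <= c x y)%R ->
  (k * fine (mu S))%:E <= transport_cost c nu mu.
Proof.
move=> mB mS nuCB k0 c0 cBS; apply: le_ereal_inf_tmp => _ [pi [pi_cpl ->]].
have mBS : measurable (B `*` S) by exact: measurableX.
pose h := scale_nnsfun (indic_nnsfun R mBS) k0.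
have hE : (fun z => (h z)%:E) = (fun z => k%:E * (\1_(B `*` S) z)%:E).
  by apply/funext => z; rewrite /h /= EFinM.
have : \int[pi]_z (h z)%:E <= \int[pi]_z (c z.1 z.2)%:E.
  apply: le_integral_nnsfun => z; first by rewrite lee_fin c0.
  rewrite /h /= mindicE; case: (boolP (z \in B `*` S)) => [/set_mem[Bz Sz]|_].
    by rewrite mulr1 lee_fin cBS.
  by rewrite mulr0 lee_fin c0.
apply: le_trans.
rewrite hE ge0_integralZl_EFin//; last exact/measurable_EFinP/measurable_indic.
rewrite integral_indic// setIT EFinM lee_wpmul2l ?lee_fin// fineK ?fin_num_measure//.
exact: (coupling_measureX_ge pi_cpl mB mS nuCB).
Qed.

End transport_lower_bound.

Section tail_bound.
Variables (R : realType) (X : completePseudoMetricType R) (d : X -> X -> R).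
Variables (alpha theta : R -> R) (mu : probability (borel X) R).
Hypotheses (hd : lsc_metric d) (ha : cvx_incr_bij alpha) (ht : cvx_incr_bij theta).
Hypothesis transport_entropy : forall nu : probability (borel X) R,
  (ext_fun alpha (transport_cost (fun x y => theta (d x y)) nu mu)
   <= rel_entropy nu mu)%E.

Lemma dist_tail_bound (xo : X) (r s : R) : s <= r ->
  (mu [set x | (r < d x xo)%R] <=
   (expR (- alpha (theta (fine (mu [set x | (d x xo <= s)%R]) * (r - s)))))%:E)%E.
Proof.
move=> sr; set B : set (borel X) := [set x | r < d x xo].
set S : set (borel X) := [set x | d x xo <= s].
have mB : measurable B := measurable_dist_gt hd xo r.
have mS : measurable S := measurable_dist_le hd xo s.
have [->|muB0] := eqVneq (mu B) 0%E; first by rewrite lee_fin expR_ge0.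
have muB : (0 < mu B)%E by rewrite lt0e muB0 measure_ge0.
have muB_gt0 := fine_probability_gt0 mB muB.
set m := fine (mu S).
have m0 : 0 <= m by apply/fine_ge0/measure_ge0.
have m1 : m <= 1 := fine_probability_le1 mu mS.
have trs0 : 0 <= theta (r - s) by apply: (cvx_incr_bij_ge0 ht); rewrite subr_ge0.
have far x y : B x -> S y -> theta (r - s) <= theta (d x y).
  rewrite /B /S /= => rx ys; apply: (cvx_incr_bij_le ht); first by rewrite subr_ge0.
  case: hd => _ _ dtri _; have := dtri x y xo; lra.
have := transport_cost_ge mu mB mS (cond_prob_setC mB muB) trs0
  (fun x y => cvx_incr_bij_ge0 ht (lsc_metric_ge0 hd x y)) far.
have := transport_entropy (cond_prob mu mB); rewrite rel_entropy_cond_prob//.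
case: transport_cost => [t| |] //=; rewrite !lee_fin => entropy cost.
have {}entropy := le_trans (cvx_incr_bij_le ha (mulr_ge0 trs0 m0) cost) entropy.
rewrite -(fineK (fin_num_measure mu _ mB)) lee_fin -(lnK muB_gt0) ler_expR lerNr.
apply: le_trans _ entropy; apply: (cvx_incr_bij_le ha).
  by apply: (cvx_incr_bij_ge0 ht); rewrite mulr_ge0 ?subr_ge0.
by rewrite [theta _ * m]mulrC; apply: (cvx_incr_bij_scale ht); rewrite ?subr_ge0 ?m0.
Qed.

End tail_bound.

Theorem mainTheorem8 (R : realType) (X : completePseudoMetricType R)
  (d : X -> X -> R) (alpha theta : R -> R)
  (mu : probability (borel X) R) :
  polish_space X ->
  lsc_metric d ->
  cvx_incr_bij alpha -> cvx_incr_bij theta ->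
  (forall nu : probability (borel X) R,
      (ext_fun alpha (transport_cost (fun x y => theta (d x y)) nu mu)
       <= rel_entropy nu mu)%E) ->
  forall xo : X, exists2 eps : R, 0 < eps &
    (\int[mu]_x (expR (alpha (theta (eps * d x xo))))%:E < +oo)%E.
Proof.
move=> _ hd ha ht transport_entropy xo.
have hphi := cvx_incr_bij_comp ha ht.
have [n mu_ball] := exists_sublevel_gt0 mu (measurable_dist_le hd xo).
set m := fine (mu [set x | d x xo <= n%:R]).
have m0 : 0 < m := fine_probability_gt0 (measurable_dist_le hd xo _) mu_ball.
have [M [q [q1 Mq]]] := exp_cvx_incr_bij_geometric_bound hphi (ler0n _ n) m0.
exists (m / 8); first by rewrite divr_gt0.
apply: (integral_lty_geometric_layers (F := fun t => expR (alpha (theta (m / 8 * t))))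
  (measurable_dist_gt hd xo) _ _ _ q1).
- by move=> x; exact: lsc_metric_ge0.
- by move=> u; exact: expR_ge0.
- move=> u v u0 uv; rewrite ler_expR; apply: (cvx_incr_bij_le hphi).
    by rewrite mulr_ge0// divr_ge0// ltW.
  by rewrite ler_pM2l// divr_gt0.
move=> k; have mE := measurable_dist_gt hd xo (k%:R - 1).
apply: (Mq k); first exact: fine_probability_le1.
move=> kn; rewrite -lee_fin fineK ?fin_num_measure//.
exact: (dist_tail_bound hd ha ht transport_entropy xo kn).
Qed.
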